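(* Let $n=p_1^{\alpha_1}p_2^{\alpha_2}\cdots p_k^{\alpha_k}$ where $p_1,\dots,p_k$ are distinct primes, $\alpha_i\geq 1$, and $k\geq 5$. Then $\mathbb{AG}(\mathbb{Z}_n)$ is not perfect.
   Context: For a commutative ring $R$ with unity, the annihilating-ideal graph $\mathbb{AG}(R)$ is the simple graph whose vertex set is the set of all non-zero ideals of $R$ with non-zero annihilator, two distinct vertices $I,J$ being adjacent if and only if $IJ=0$. A graph $G$ is perfect if $\omega(H)=\chi(H)$ for every induced subgraph $H$ of $G$. *)

From mathcomp Require Import all_boot all_order all_algebra.
Set Implicit Arguments. Unset Strict Implicit. Unset Printing Implicit Defensive.
Import GRing.Theory.
Local Open Scope ring_scope.

Section Graphs.
Variables (V : finType) (adj : rel V).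

Definition is_clique (C : {set V}) : Prop :=
  forall x y, x \in C -> y \in C -> x != y -> adj x y.

Definition clique_number (S : {set V}) (w : nat) : Prop :=
  (exists C : {set V}, C \subset S /\ is_clique C /\ #|C| = w) /\
  (forall C : {set V}, C \subset S -> is_clique C -> (#|C| <= w)%N).

Definition colorable (S : {set V}) (k : nat) : Prop :=
  exists f : V -> nat, (forall x, x \in S -> (f x < k)%N) /\
    (forall x y, x \in S -> y \in S -> x != y -> adj x y -> f x <> f y).

Definition chromatic_number (S : {set V}) (c : nat) : Prop :=
  colorable S c /\ (forall k, colorable S k -> (c <= k)%N).

Definition perfect (Vs : {set V}) : Prop :=
  forall S : {set V}, S \subset Vs ->
    exists w, clique_number S w /\ chromatic_number S w.
End Graphs.

Section AG.
Variable R : finComNzRingType.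

Definition is_ideal (I : {set R}) : bool :=
  [&& (0 : R) \in I,
      [forall x in I, forall y in I, (x - y) \in I] &
      [forall r : R, forall x in I, (r * x) \in I]].

Definition ann_nonzero (I : {set R}) : bool :=
  [exists a : R, (a != 0) && [forall x in I, a * x == 0]].

Definition AG_vertices : {set {set R}} :=
  [set I : {set R} | [&& is_ideal I, I != [set (0 : R)] & ann_nonzero I]].

(* I J = 0, i.e. every product x y (x in I, y in J) vanishes
   (equivalently the ideal generated by these products is zero) *)
Definition ideal_prod_zero (I J : {set R}) : bool :=
  [forall x in I, forall y in J, x * y == 0].

Definition AG_adj : rel {set R} :=
  fun I J => (I != J) && ideal_prod_zero I J.
End AG.

From mathcomp Require Import all_boot all_order all_algebra.
From mathcomp Require Import zify.

(* An induced pentagon makes AG(Z_n) imperfect, since C5 has clique number 2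
   and chromatic number 3.  Pick five distinct primes p_0, ..., p_4 of n and
   attach to each vertex i of Z/5 the pair of primes {p_2i, p_2i+1} and the
   ideal generated by the largest divisor of n coprime to that pair.  Two such
   ideals multiply to zero exactly when their pairs are disjoint, that is when
   2(i - j) is not in {0, 1, -1}, that is when i - j = +-1. *)

Definition C5 : rel 'I_5 := fun i j => (j == i + 1)%R || (i == j + 1)%R.

Definition twin (i : 'I_5) : seq 'I_5 := [:: i + i; i + i + 1]%R.

Lemma twins_disjointE i j : ~~ has (mem (twin j)) (twin i) = C5 i j.
Proof. by case: i j => [[|[|[|[|[|//]]]]] ?] [[|[|[|[|[|//]]]]] ?]. Qed.

Lemma C5_irrefl i : ~~ C5 i i.
Proof. by case: i => [[|[|[|[|[|//]]]]] ?]. Qed.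

Lemma C5_triangle_free i j k : C5 i j -> C5 j k -> C5 k i -> False.
Proof.
by case: i j k => [[|[|[|[|[|//]]]]] ?] [[|[|[|[|[|//]]]]] ?] [[|[|[|[|[|//]]]]] ?].
Qed.

Section InducedC5.
Context {V : finType} {adj : rel V} {c : 'I_5 -> V}.
Hypothesis adj_c : forall i j, adj (c i) (c j) = C5 i j.

Let S := [set c i | i : 'I_5].

Lemma induced_C5_clique (C : {set V}) :
  C \subset S -> is_clique adj C -> #|C| <= 2.
Proof.
move=> sCS cliqueC; rewrite leqNgt; apply/negP.
case/card_gt2P=> x [y [z [[xC yC zC] [xy yz zx]]]].
have := cliqueC _ _ xC yC xy; have := cliqueC _ _ yC zC yz.
have := cliqueC _ _ zC xC zx.
case/imsetP: (subsetP sCS x xC) => i _ ->; case/imsetP: (subsetP sCS y yC) => j _ ->.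
case/imsetP: (subsetP sCS z zC) => k _ ->; rewrite !adj_c => ki jk ij.
exact: C5_triangle_free ij jk ki.
Qed.

Lemma induced_C5_not_bipartite : ~ colorable adj S 2.
Proof.
case=> f [f_lt2 f_adj].
have f_C5 i j : C5 i j -> f (c i) <> f (c j).
  rewrite -adj_c => ij; have cij : c i != c j.
    by apply: contraTneq ij => ->; rewrite adj_c (negbTE (C5_irrefl j)).
  by apply: f_adj ij; rewrite ?imset_f.
have f_lt i : f (c i) < 2 by apply: f_lt2; rewrite imset_f.
have := f_C5 0%R 1%R isT; have := f_C5 1%R 2%R isT; have := f_C5 2%R 3%R isT.
have := f_C5 3%R 4%R isT; have := f_C5 4%R 0%R isT.
move: (f_lt 0%R) (f_lt 1%R) (f_lt 2%R) (f_lt 3%R) (f_lt 4%R); lia.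
Qed.

Lemma induced_C5_not_perfect (Vs : {set V}) :
  (forall i, c i \in Vs) -> ~ perfect adj Vs.
Proof.
move=> c_in perf.
have S_sub : S \subset Vs by apply/subsetP=> _ /imsetP [i _ ->].
have [w [[[C [sCS [cliqueC <-]]] _] [[f [f_lt f_adj]] _]]] := perf S S_sub.
apply: induced_C5_not_bipartite; exists f; split=> // x xS.
exact: leq_trans (f_lt x xS) (induced_C5_clique C sCS cliqueC).
Qed.

End InducedC5.

Lemma AG_adjE (R : finComNzRingType) (I J : {set R}) :
  ~~ ideal_prod_zero I I -> AG_adj I J = ideal_prod_zero I J.
Proof.
by move=> nzII; rewrite /AG_adj; case: eqP => // <-; rewrite (negbTE nzII).
Qed.

Lemma dvdn_modr_eq d m n : d %| n -> (d %| m %% n) = (d %| m).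
Proof. by move=> dn; rewrite /dvdn (modn_dvdm _ dn). Qed.

Section DivisorIdeals.
Variable m : nat.
Local Notation N := m.+2.

Definition divisor_ideal (d : nat) : {set 'Z_N} := [set x : 'Z_N | d %| x].

Lemma divisor_ideal_is_ideal d : d %| N -> is_ideal (divisor_ideal d).
Proof.
move=> dN; apply/and3P; split; first by rewrite inE dvdn0.
- apply/forall_inP=> x; rewrite inE => dx; apply/forall_inP=> y; rewrite inE => dy.
  by rewrite inE /= dvdn_modr_eq // dvdn_add // dvdn_modr_eq // dvdn_sub.
- apply/forallP=> r; apply/forall_inP=> x; rewrite !inE => dx.
  by rewrite /= dvdn_modr_eq // dvdn_mull.
Qed.

Lemma divisor_ideal_vertex d :
  d %| N -> 1 < d < N -> divisor_ideal d \in AG_vertices 'Z_N.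
Proof.
move=> dN /andP [d_gt1 d_lt]; rewrite inE divisor_ideal_is_ideal //=.
have Nd_lt : N %/ d < N by rewrite ltn_Pdiv.
apply/andP; split.
  apply/eqP => /setP /(_ (inZp d)); rewrite !inE /= modn_small // dvdnn.
  by move/esym/eqP/(congr1 val); rewrite /= modn_small //; lia.
apply/existsP; exists (inZp (N %/ d)); apply/andP; split.
  apply/eqP => /(congr1 val); rewrite /= modn_small // => Nd0.
  by have := divnK dN; rewrite Nd0.
apply/forall_inP=> x; rewrite inE => /dvdnP [k xk].
apply/eqP/val_inj; rewrite /= (modn_small Nd_lt) xk mulnCA divnK //.
exact: modnMl.
Qed.

Lemma divisor_ideal_prod_zero d e : d < N -> e < N ->
  ideal_prod_zero (divisor_ideal d) (divisor_ideal e) = (N %| d * e).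
Proof.
move=> d_lt e_lt; apply/forall_inP/idP => [prod0 | Nde x].
  have /prod0/forall_inP/(_ (inZp e)) : inZp d \in divisor_ideal d.
    by rewrite inE /= modn_small.
  rewrite inE /= (modn_small e_lt) dvdnn => /(_ isT)/eqP/(congr1 val) /=.
  by rewrite (modn_small d_lt) (modn_small e_lt) => /eqP.
rewrite inE => /dvdnP [k xk]; apply/forall_inP=> y; rewrite inE => /dvdnP [l yl].
apply/eqP/val_inj; apply/eqP; rewrite /= xk yl mulnACA.
exact: dvdn_mull.
Qed.

End DivisorIdeals.

Lemma dvdn_mul_partnC n (pi1 pi2 : nat_pred) : 0 < n ->
  (n %| n`_pi1^' * n`_pi2^') = ~~ has [predI pi1 & pi2] (primes n).
Proof.
move=> n_gt0; apply/idP/hasPn => [n_dvd p p_n | pi12].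
  move: (p_n); rewrite mem_primes => /and3P [pr_p _ p_dvd_n].
  have p_notin (pi : nat_pred) : p %| n`_pi^' -> p \notin pi.
    move=> p_dvd; apply: (pnatPpi (part_pnat pi^' n)).
    by rewrite mem_primes pr_p part_gt0.
  have := dvdn_trans p_dvd_n n_dvd; rewrite Euclid_dvdM //.
  by case/orP => /p_notin; rewrite inE /= => /negbTE ->; rewrite ?andbF.
rewrite -{1}(partnC pi1 n_gt0) mulnC dvdn_mul // sub_in_partn // => p p_n p1.
by have := pi12 p p_n; rewrite inE /= p1.
Qed.

Lemma partnC_gt1 n (pi : nat_pred) :
  0 < n -> (1 < n`_pi^') = has [predC pi] (primes n).
Proof.
move=> n_gt0; rewrite ltn_neqAle part_gt0 andbT eq_sym partn_eq1 // pnatNK.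
by rewrite /pnat n_gt0 has_predC.
Qed.

Lemma partnC_lt n (pi : nat_pred) : 0 < n -> has pi (primes n) -> n`_pi^' < n.
Proof.
move=> n_gt0 pi_n; rewrite -{2}(partnC pi n_gt0) ltn_Pmull ?part_gt0 //.
rewrite -partnNK partnC_gt1 //; apply: sub_has pi_n => p; by rewrite /= negbK.
Qed.

Section PentagonIdeals.
Variable m : nat.
Local Notation N := m.+2.

Definition prime_of (i : 'I_5) := nth 0 (primes N) i.
Definition twin_primes (i : 'I_5) : nat_pred :=
  [pred q | q \in map prime_of (twin i)].
Definition C5_ideal (i : 'I_5) := divisor_ideal m N`_(twin_primes i)^'.

Hypothesis five_primes : 5 <= size (primes N).

Lemma prime_of_primes i : prime_of i \in primes N.
Proof. exact/mem_nth/(leq_trans (ltn_ord i) five_primes). Qed.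

Lemma prime_of_inj : injective prime_of.
Proof.
move=> i j /eqP; rewrite nth_uniq ?primes_uniq //; last first.
- exact: leq_trans (ltn_ord j) five_primes.
- exact: leq_trans (ltn_ord i) five_primes.
by move/eqP/val_inj.
Qed.

Lemma has_common_twin_prime i j :
  has [predI twin_primes i & twin_primes j] (primes N) =
  has (mem (twin j)) (twin i).
Proof.
apply/hasP/hasP => [[_ _ /andP [/mapP [a ai ->]]] | [a ai aj]].
  case/mapP=> b bj /prime_of_inj ab.
  by exists a; rewrite // ab.
by exists (prime_of a); rewrite ?prime_of_primes // inE /= !map_f.
Qed.

Lemma partnC_twin_primes_lt i : N`_(twin_primes i)^' < N.
Proof.
apply: partnC_lt => //; apply/hasP; exists (prime_of (i + i)%R).
  exact: prime_of_primes.
by rewrite /twin_primes /= mem_head.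
Qed.

Lemma C5_ideal_vertex i : C5_ideal i \in AG_vertices 'Z_N.
Proof.
apply: divisor_ideal_vertex; first exact: dvdn_part.
rewrite partnC_twin_primes_lt partnC_gt1 // andbT has_predC.
apply: contraTN five_primes => /allP twin_all; rewrite -ltnNge.
by apply: leq_ltn_trans (uniq_leq_size (primes_uniq N) twin_all) _; rewrite size_map.
Qed.

Lemma C5_ideal_prod_zero i j :
  ideal_prod_zero (C5_ideal i) (C5_ideal j) = ~~ has (mem (twin j)) (twin i).
Proof.
rewrite divisor_ideal_prod_zero ?partnC_twin_primes_lt //.
by rewrite dvdn_mul_partnC // has_common_twin_prime.
Qed.

Lemma adj_C5_ideal i j : AG_adj (C5_ideal i) (C5_ideal j) = C5 i j.
Proof.
by rewrite AG_adjE C5_ideal_prod_zero ?twins_disjointE ?C5_irrefl.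
Qed.

End PentagonIdeals.

Theorem lemma1 (n : nat) (Hk : (5 <= size (primes n))%N) :
  ~ perfect (@AG_adj 'Z_n) (AG_vertices 'Z_n).
Proof.
case: n Hk => [|[|m]] // Hk.
apply: (induced_C5_not_perfect (adj_C5_ideal _ Hk)).
exact: C5_ideal_vertex.
Qed.
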